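(* Consider $N$ agents $\mathcal{V}=\{1,\dots,N\}$ interacting over a fixed graph in which agent $i$ has the nonempty neighbor set $\mathcal{N}_i$ of cardinality $n_i$. Let $\beta\in[0,1)$ and let $(q_p(k))_{k\ge0}$ be any sequence with values in $\{-1,1\}$. The opinions evolve by $$\theta_i(k+1)=\theta_i(k)+\bigl(1-\theta_i(k)^2\bigr)\Bigl[\beta\bigl(q_p(k)-\theta_i(k)\bigr)+(1-\beta)\frac{1}{n_i}\sum_{j\in\mathcal{N}_i}\bigl(q_j(k)-\theta_i(k)\bigr)\Bigr],$$ with actions $q_j(k)=1$ if $\theta_j(k)>0$ or ($\theta_j(k)=0$ and $q_j(k-1)=1$), and $q_j(k)=-1$ if $\theta_j(k)<0$ or ($\theta_j(k)=0$ and $q_j(k-1)=-1$), and with $\theta_j(0)\in(-1,1)\setminus\{0\}$ for all $j$. If $A\subset\mathcal{V}$ is a strongly robust polarized cluster, then $q_i(k)=q_i(0)$ for all $i\in A$ and all $k\in\mathbb{N}$.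
   Context: The neighbor set $\mathcal{N}_i$ consists of the agents $j$ with $(j,i)$ an edge of the graph. A subset $A\subset\mathcal{V}$ is a strongly robust polarized cluster if (i) $q_i(0)=q_j(0)$ for all $i,j\in A$, and (ii) for all $i\in A$, $|\mathcal{N}_i\cap A|\ge|\mathcal{N}_i\setminus A|+\frac{\beta}{1-\beta}|\mathcal{N}_i|$. *)

From HB Require Import structures.
From mathcomp Require Import all_boot all_order all_algebra.
Set Implicit Arguments. Unset Strict Implicit. Unset Printing Implicit Defensive.
Import Order.TTheory GRing.Theory Num.Theory.
Local Open Scope ring_scope.

Definition nbrs (N : nat) (e : rel 'I_N) (i : 'I_N) : {set 'I_N} :=
  [set j | e j i].

Definition opinion_dynamics (R : realFieldType) (N : nat) (e : rel 'I_N)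
    (beta : R) (qp : nat -> R) (theta q : nat -> 'I_N -> R) : Prop :=
  forall (k : nat) (i : 'I_N),
    theta k.+1 i = theta k i + (1 - theta k i ^+ 2) *
      (beta * (qp k - theta k i)
       + (1 - beta) * (#|nbrs e i|%:R)^-1 *
           \sum_(j in nbrs e i) (q k j - theta k i)).

(* At k = 0, theta_j(0) <> 0, so q_j(0) is determined by the sign of theta_j(0). *)
Definition action_rule (R : realFieldType) (N : nat)
    (theta q : nat -> 'I_N -> R) : Prop :=
  (forall j : 'I_N,
     (0 < theta 0%N j -> q 0%N j = 1) /\ (theta 0%N j < 0 -> q 0%N j = -1)) /\
  (forall (k : nat) (j : 'I_N),
     ((0 < theta k.+1 j \/ (theta k.+1 j = 0 /\ q k j = 1)) -> q k.+1 j = 1) /\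
     ((theta k.+1 j < 0 \/ (theta k.+1 j = 0 /\ q k j = -1)) -> q k.+1 j = -1)).

Definition strongly_robust_polarized_cluster (R : realFieldType) (N : nat)
    (e : rel 'I_N) (beta : R) (q : nat -> 'I_N -> R) (A : {set 'I_N}) : Prop :=
  (forall i j, i \in A -> j \in A -> q 0%N i = q 0%N j) /\
  (forall i, i \in A ->
     (#|nbrs e i :&: A|%:R : R) >=
       #|nbrs e i :\: A|%:R + beta / (1 - beta) * #|nbrs e i|%:R).

From HB Require Import structures.
From mathcomp Require Import all_boot all_order all_algebra.
From mathcomp Require Import ring lra.
Import Order.TTheory GRing.Theory Num.Theory.
Set Implicit Arguments. Unset Strict Implicit.
Local Open Scope ring_scope.

(* Let s = ±1 be the common initial action of the cluster A.  By induction on k,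
   every agent j of A keeps q_j(k) = s and s theta_j(k) in [0, 1].  Indeed, the
   update of s theta_j is th + (1 - th^2)(m - th) with th = s theta_j and
   m = beta (s q_p) + (1 - beta) (mean of s q_l over the neighbours of j); the
   robustness inequality makes the neighbours inside A outweigh both those
   outside A and the stubborn agent p, so m lies in [0, 1], and this map
   sends [0, 1] x [0, 1] into [0, 1].  A nonnegative s theta_j keeps action s. *)

Section OpinionStep.
Variable R : realFieldType.
Implicit Types beta p th a m s : R.

Definition opinion_step beta p th a :=
  th + (1 - th ^+ 2) * (beta * (p - th) + (1 - beta) * (a - th)).

Lemma relax_step_in01 th m : 0 <= th <= 1 -> 0 <= m <= 1 ->
  0 <= th + (1 - th ^+ 2) * (m - th) <= 1.
Proof.
move=> /andP[th0 th1] /andP[m0 m1].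
have w0 : 0 <= 1 - th ^+ 2 by nra.
apply/andP; split; nra.
Qed.

Lemma opinion_step_in01 beta p th a : 0 <= beta < 1 -> -1 <= p <= 1 ->
  beta <= (1 - beta) * a -> a <= 1 -> 0 <= th <= 1 ->
  0 <= opinion_step beta p th a <= 1.
Proof.
move=> /andP[b0 b1] /andP[p0 p1] ha a1 th01.
have -> : opinion_step beta p th a =
    th + (1 - th ^+ 2) * ((beta * p + (1 - beta) * a) - th).
  by rewrite /opinion_step; ring.
by apply: relax_step_in01 => //; apply/andP; split; nra.
Qed.

Lemma opinion_step_sign beta p th a s : s ^+ 2 = 1 ->
  s * opinion_step beta p th a = opinion_step beta (s * p) (s * th) (s * a).
Proof. by move=> s2; rewrite /opinion_step exprMn s2 mul1r; ring. Qed.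

End OpinionStep.

Lemma opinion_dynamicsE (R : realFieldType) (N : nat) (e : rel 'I_N)
    (beta : R) (qp : nat -> R) (theta q : nat -> 'I_N -> R) k i :
  opinion_dynamics e beta qp theta q -> nbrs e i != set0 ->
  theta k.+1 i = opinion_step beta (qp k) (theta k i)
                   ((#|nbrs e i|%:R)^-1 * \sum_(j in nbrs e i) q k j).
Proof.
move=> /(_ k i) -> ne; rewrite /opinion_step sumrB sumr_const -mulr_natr.
have n0 : (#|nbrs e i|%:R : R) != 0 by rewrite pnatr_eq0 -lt0n card_gt0.
by congr (_ + _ * (_ + _)); field.
Qed.

Section BoundedSums.
Variables (R : realFieldType) (T : finType) (X A : {set T}) (f : T -> R).
Hypotheses (f_ge : forall j, -1 <= f j) (f_le : forall j, f j <= 1).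

Lemma sum_le_card : \sum_(j in X) f j <= #|X|%:R.
Proof. by rewrite -[#|X|%:R]sumr_const; apply: ler_sum. Qed.

Lemma card_diff_le_sum : {in X :&: A, forall j, f j = 1} ->
  #|X :&: A|%:R - #|X :\: A|%:R <= \sum_(j in X) f j.
Proof.
move=> fA; rewrite (big_setID A) /= -!sumr_const -sumrN.
by apply: lerD; [rewrite (eq_bigr _ fA) | apply: ler_sum => j _].
Qed.

End BoundedSums.

Lemma robust_weight_bound (R : realFieldType) (beta nA nO n S : R) :
  0 <= beta < 1 -> nO + beta / (1 - beta) * n <= nA -> nA - nO <= S ->
  beta * n <= (1 - beta) * S.
Proof.
move=> /andP[b0 b1] hA hS.
have b1' : 1 - beta != 0 by rewrite subr_eq0 eq_sym lt_eqF.
have -> : beta * n = (1 - beta) * (beta / (1 - beta) * n) by field.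
by apply: ler_wpM2l; lra.
Qed.

Section Actions.
Variables (R : realFieldType) (N : nat) (theta q : nat -> 'I_N -> R).
Hypothesis hq : action_rule theta q.

Lemma action_rule_pm1 : (forall j, theta 0%N j != 0) ->
  forall k j, q k j = 1 \/ q k j = -1.
Proof.
case: hq => q0 qS th0; elim=> [|k IH] j.
  case: (q0 j) => pos neg; move: (th0 j); rewrite neq_lt => /orP[lt|gt].
  - by right; apply: neg.
  - by left; apply: pos.
case: (qS k j) => pos neg; case: (ltgtP (theta k.+1 j) 0) => [lt|gt|eq0].
- by right; apply: neg; left.
- by left; apply: pos; left.
- by case: (IH j) => qk; [left; apply: pos | right; apply: neg]; right.
Qed.

Lemma action_rule_init j : theta 0%N j != 0 -> -1 < theta 0%N j < 1 ->
  0 <= q 0%N j * theta 0%N j <= 1.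
Proof.
case: hq => q0 _; case: (q0 j) => pos neg nz /andP[l1 l2].
move: nz; rewrite neq_lt => /orP[lt|gt]; [rewrite (neg lt) | rewrite (pos gt)];
  by apply/andP; split; lra.
Qed.

Lemma action_rule_keep k j s : s = 1 \/ s = -1 -> q k j = s ->
  0 <= s * theta k.+1 j -> q k.+1 j = s.
Proof.
case: hq => _ /(_ k j) [pos neg] [] -> qk.
- rewrite mul1r le_eqVlt => /orP[/eqP th0 | th]; apply: pos; by [right | left].
- rewrite mulN1r oppr_ge0 le_eqVlt => /orP[/eqP th0 | th]; apply: neg; by [right | left].
Qed.

End Actions.

Section RobustCluster.
Variables (R : realFieldType) (N : nat) (e : rel 'I_N) (beta : R).
Variables (qp : nat -> R) (theta q : nat -> 'I_N -> R) (A : {set 'I_N}) (s : R).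
Hypotheses (nbrs_neq0 : forall i, nbrs e i != set0) (beta01 : 0 <= beta < 1).
Hypotheses (qp_bound : forall k, -1 <= qp k <= 1) (s_pm1 : s = 1 \/ s = -1).
Hypotheses (q_pm1 : forall k j, q k j = 1 \/ q k j = -1).
Hypotheses (hq : action_rule theta q) (hdyn : opinion_dynamics e beta qp theta q).
Hypothesis robustA : forall i, i \in A ->
  (#|nbrs e i :&: A|%:R : R) >= #|nbrs e i :\: A|%:R + beta / (1 - beta) * #|nbrs e i|%:R.

Definition polarized_at k := {in A, forall j, q k j = s /\ 0 <= s * theta k j <= 1}.

Lemma polarized_mean_bound k j : polarized_at k -> j \in A ->
  let a := s * ((#|nbrs e j|%:R)^-1 * \sum_(l in nbrs e j) q k l) in
  beta <= (1 - beta) * a /\ a <= 1.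
Proof.
move=> polk jA a.
have n0 : (0 : R) < #|nbrs e j|%:R by rewrite ltr0n card_gt0.
have sq_ge l : -1 <= s * q k l by case: s_pm1 (q_pm1 k l) => -> [] ->; lra.
have sq_le l : s * q k l <= 1 by case: s_pm1 (q_pm1 k l) => -> [] ->; lra.
have sqA : {in nbrs e j :&: A, forall l, s * q k l = 1}.
  move=> l /setIP[_ lA]; case: (polk l lA) => -> _.
  by case: s_pm1 => ->; lra.
have aE : a * #|nbrs e j|%:R = \sum_(l in nbrs e j) s * q k l.
  by rewrite /a -mulr_sumr; field; rewrite gt_eqF.
have hS := card_diff_le_sum sq_ge sqA.
have hw := robust_weight_bound beta01 (robustA jA) hS.
split.
- by rewrite -(ler_pM2r n0) -mulrA aE.
- by rewrite -(ler_pM2r n0) mul1r aE; apply: sum_le_card.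
Qed.

Lemma polarized_step k : polarized_at k -> polarized_at k.+1.
Proof.
move=> polk j jA; have [qkj thj] := polk j jA.
have s2 : s ^+ 2 = 1 by case: s_pm1 => ->; rewrite ?sqrrN expr1n.
have [ha a1] := polarized_mean_bound polk jA.
have th1 : 0 <= s * theta k.+1 j <= 1.
  rewrite (opinion_dynamicsE _ hdyn) // opinion_step_sign //.
  apply: opinion_step_in01 => //.
  by case: s_pm1 (qp_bound k) => -> /andP[? ?]; apply/andP; split; lra.
split=> //; apply: (action_rule_keep hq) => //.
by case/andP: th1.
Qed.

End RobustCluster.

Theorem mainTheorem6 (R : realFieldType) (N : nat) (e : rel 'I_N)
    (beta : R) (qp : nat -> R) (theta q : nat -> 'I_N -> R) (A : {set 'I_N}) :
  (forall i : 'I_N, nbrs e i != set0) ->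
  0 <= beta -> beta < 1 ->
  (forall k, qp k = 1 \/ qp k = -1) ->
  (forall j : 'I_N, -1 < theta 0%N j < 1 /\ theta 0%N j != 0) ->
  action_rule theta q ->
  opinion_dynamics e beta qp theta q ->
  strongly_robust_polarized_cluster e beta q A ->
  forall i, i \in A -> forall k : nat, q k i = q 0%N i.
Proof.
move=> nbrs_neq0 b0 b1 qp_pm1 theta0 hq hdyn [qA robustA] i iA.
have beta01 : 0 <= beta < 1 by apply/andP.
have qp_bound k : -1 <= qp k <= 1 by case: (qp_pm1 k) => ->; apply/andP; split; lra.
have q_pm1 := action_rule_pm1 hq (fun j => (theta0 j).2).
have pol k : polarized_at theta q A (q 0%N i) k.
  elim: k => [|k]; last exact: (polarized_step nbrs_neq0 beta01).
  move=> j jA; rewrite -(qA j i jA iA); split=> //.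
  by case: (theta0 j) => th01 nz; apply: action_rule_init.
by move=> k; case: (pol k i iA).
Qed.
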